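(* Let $p$ be a prime, $A$ a torsion-free $\mathbb{Z}_{(p)}$-algebra, $\mathfrak a\subseteq A$ a divided-power ideal, $P,Q\in A[X]$ monic, and $N\ge1$. If $p_n(P)\equiv p_n(Q)\pmod{n\mathfrak a}$ for all $1\le n\le N$, then $e_n(P)\equiv e_n(Q)\pmod{\mathfrak a}$ for all $1\le n\le N$.
   Context: An ideal $\mathfrak a$ of a torsion-free $\mathbb{Z}_{(p)}$-algebra $A$ is a divided-power ideal if $a^p\in p\,\mathfrak a$ for all $a\in\mathfrak a$ (equivalently $a^k/k!\in\mathfrak a$ in $A\otimes\mathbb{Q}$ for all $a\in\mathfrak a$, $k\ge1$). For a monic $P=X^d+a_1X^{d-1}+\dots+a_d\in A[X]$: $e_0(P)=1$, $e_n(P)=(-1)^na_n$ for $1\le n\le d$, $e_n(P)=0$ for $n>d$; and $p_n(P)$ for $n\ge1$ is defined by Newton's identities $p_n(P)=\sum_{i=1}^{n-1}(-1)^{i-1}e_i(P)p_{n-i}(P)+(-1)^{n-1}n\,e_n(P)$ (for $A$ a domain, the $n$-th power sum of the roots of $P$ with multiplicity). $n\mathfrak a=\{na:a\in\mathfrak a\}$. *)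

From HB Require Import structures.
From mathcomp Require Import all_boot all_order all_algebra.
Set Implicit Arguments. Unset Strict Implicit. Unset Printing Implicit Defensive.
Import Order.TTheory GRing.Theory.
Local Open Scope ring_scope.

Section Defs.
Variable A : comNzRingType.

Definition Zp_local_algebra (p : nat) : Prop :=
  forall n : nat, ~~ (p %| n)%N -> exists b : A, n%:R * b = 1.

Definition torsion_free : Prop :=
  forall (n : nat) (a : A), (0 < n)%N -> n%:R * a = 0 -> a = 0.

Definition is_ideal (I : A -> Prop) : Prop :=
  [/\ I 0,
      forall x y, I x -> I y -> I (x + y) &
      forall r x, I x -> I (r * x)].

Definition dp_ideal (p : nat) (I : A -> Prop) : Prop :=
  is_ideal I /\ forall a, I a -> exists b, I b /\ a ^+ p = p%:R * b.

Definition cong_mult (n : nat) (I : A -> Prop) (x y : A) : Prop :=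
  exists b, I b /\ x - y = n%:R * b.

Definition cong_mod (I : A -> Prop) (x y : A) : Prop := I (x - y).

(* e_n(P) for P = X^d + a_1 X^(d-1) + ... + a_d : e_0 = 1 (P monic),
   e_n = (-1)^n a_n = (-1)^n P`_(d-n) for 1 <= n <= d, 0 for n > d. *)
Definition elem (P : {poly A}) (n : nat) : A :=
  if (n <= (size P).-1)%N then (-1) ^+ n * P`_((size P).-1 - n) else 0.

(* Newton's identities: given e and s = [:: p_1; ...; p_(n-1)], compute p_n. *)
Definition newton_step (e : nat -> A) (s : seq A) (n : nat) : A :=
  \sum_(1 <= i < n) (-1) ^+ (i - 1) * e i * nth 0 s (n - i - 1)
  + (-1) ^+ (n - 1) * n%:R * e n.

(* psums e n = [:: p_1; ...; p_n]. *)
Fixpoint psums (e : nat -> A) (n : nat) : seq A :=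
  match n with
  | 0 => [::]
  | n'.+1 => let s := psums e n' in rcons s (newton_step e s n'.+1)
  end.

Definition powsum (P : {poly A}) (n : nat) : A :=
  nth 0 (psums (elem P) n) n.-1.

End Defs.

(* Let S_P = sum_i (-1)^i e_i(P) X^i, truncated at degree N.  Newton's
   identities say X S_P' + S_P * sum_{i>=1} p_i(P) X^i = 0 mod X^(N+1), and in
   a torsion-free ring this relation determines S_P from the p_i(P).  Starting
   from S_Q, correct the power sums of Q one degree at a time: if
   p_j(P) - p_j(Q) = j b with b in the ideal, multiplying by the truncated
   exponential exp(b X^j) = sum_k (b^k/k!) X^(jk) adds j b X^j to the power
   sums and, as the divided powers b^k/k! lie in the ideal, keeps the series
   congruent to S_Q modulo the ideal.  After N steps the series has the power
   sums of P, hence equals S_P. *)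

From HB Require Import structures.
From mathcomp Require Import all_boot all_order all_algebra ring zify.
From Stdlib Require Import IndefiniteDescription.

Set Implicit Arguments.
Unset Strict Implicit.
Unset Printing Implicit Defensive.

Import GRing.Theory.
Local Open Scope ring_scope.

Lemma fact_addn_ndvd (p a k : nat) : prime p -> (p %| a)%N -> (k < p)%N ->
  exists2 R, ~~ (p %| R)%N & ((a + k)`! = a`! * R)%N.
Proof.
move=> p_pr p_dvd_a; elim: k => [|k IHk] lt_kp.
  by exists 1%N; rewrite ?addn0 ?muln1 // gtnNdvd // prime_gt1.
have [R p_ndvd_R eR] := IHk (ltnW lt_kp).
exists (R * (a + k).+1)%N; last by rewrite addnS factS eR; ring.
by rewrite Euclid_dvdM // negb_or p_ndvd_R -addnS dvdn_addr // gtnNdvd.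
Qed.

Lemma fact_pmul (p m : nat) : prime p ->
  exists2 R, ~~ (p %| R)%N & ((p * m)`! = p ^ m * m`! * R)%N.
Proof.
move=> p_pr; have p_gt0 := prime_gt0 p_pr.
elim: m => [|m [R p_ndvd_R eR]].
  by exists 1%N; rewrite ?muln0 // gtnNdvd // prime_gt1.
have lt_p : (p.-1 < p)%N by rewrite ltn_predL.
have [Q p_ndvd_Q eQ] := fact_addn_ndvd p_pr (dvdn_mulr m (dvdnn p)) lt_p.
exists (R * Q)%N; first by rewrite Euclid_dvdM // negb_or p_ndvd_R.
have e_pm : (p * m.+1 = (p * m + p.-1).+1)%N by rewrite -addnS prednK // mulnS addnC.
by rewrite e_pm factS eQ eR -e_pm expnS factS; ring.
Qed.

Section Ideals.
Variables (A : comNzRingType) (I : A -> Prop).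
Hypothesis I_ideal : is_ideal I.

Lemma ideal0 : I 0.
Proof. by case: I_ideal. Qed.

Lemma idealD x y : I x -> I y -> I (x + y).
Proof. by case: I_ideal => _ + _; apply. Qed.

Lemma idealMl r x : I x -> I (r * x).
Proof. by case: I_ideal => _ _; apply. Qed.

Lemma idealN x : I x -> I (- x).
Proof. by rewrite -mulN1r; apply: idealMl. Qed.

Lemma ideal_sum (J : Type) (r : seq J) (P : pred J) (F : J -> A) :
  (forall j, P j -> I (F j)) -> I (\sum_(j <- r | P j) F j).
Proof. exact: big_ind ideal0 idealD _ _ _ _. Qed.

Lemma ideal_signMl n x : I ((-1) ^+ n * x) -> I x.
Proof. by rewrite -{2}(signrMK n x); apply: idealMl. Qed.

End Ideals.

Lemma torsion_free_natrI (A : comNzRingType) (n : nat) (x y : A) :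
  torsion_free A -> (0 < n)%N -> n%:R * x = n%:R * y -> x = y.
Proof.
move=> A_tf n_gt0 /eqP; rewrite -subr_eq0 -mulrBr => /eqP /(A_tf _ _ n_gt0).
by move/eqP; rewrite subr_eq0 => /eqP.
Qed.

Section DividedPowers.
Variables (A : comNzRingType) (p : nat) (I : A -> Prop).
Hypotheses (p_pr : prime p) (A_loc : Zp_local_algebra A p) (I_dp : dp_ideal p I).

Let I_ideal : is_ideal I := I_dp.1.

Lemma dp_ideal_expr n x : (0 < n)%N -> I x -> exists2 y, I y & x ^+ n = n`!%:R * y.
Proof.
elim/ltn_ind: n x => -[//|[|k]] IHn x _ Ix; first by exists x; rewrite // expr1 mul1r.
(* For n = p m, x^n = (x^p)^m = p^m h^m, and (p m)! is p^m m! times a unit. *)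
have [/dvdnP[m e_n]|p_ndvd] := boolP (p %| k.+2)%N.
  rewrite mulnC in e_n.
  have m_gt0 : (0 < m)%N by case: m e_n => //; rewrite muln0.
  have lt_m : (m < k.+2)%N.
    by rewrite e_n -[X in (X < _)%N]mul1n ltn_pmul2r // prime_gt1.
  have [h [Ih eh]] := I_dp.2 x Ix.
  have [y Iy ey] := IHn m lt_m h m_gt0 Ih.
  have [R p_ndvd_R eR] := fact_pmul m p_pr.
  have [u eu] := A_loc p_ndvd_R.
  exists (u * y); first exact: (idealMl I_ideal).
  rewrite e_n; transitivity (R%:R * u * x ^+ (p * m)); first by rewrite eu mul1r.
  by rewrite exprM eh exprMn ey eR !natrM natrX; ring.
have [y Iy ey] := IHn k.+1 (ltnSn _) x isT Ix.
have [u eu] := A_loc p_ndvd.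
exists (u * (x * y)); first by do 2 apply: (idealMl I_ideal).
transitivity ((k.+2)%:R * u * x ^+ k.+2); first by rewrite eu mul1r.
by rewrite exprS ey (factS k.+1) natrM; ring.
Qed.

Hypothesis A_tf : torsion_free A.

Lemma divided_powers_exist d : I d -> exists g : nat -> A,
  [/\ g 0%N = 1, forall k, (0 < k)%N -> I (g k) &
      forall k, k.+1%:R * g k.+1 = d * g k].
Proof.
move=> Id.
have gE k : exists y, d ^+ k = k`!%:R * y /\ (if k is 0 then y = 1 else I y).
  case: k => [|k]; first by exists 1; rewrite expr0 mulr1.
  by have [y Iy ey] := dp_ideal_expr (ltn0Sn k) Id; exists y.
have [g gP] : {g : nat -> A |
    forall k, d ^+ k = k`!%:R * g k /\ (if k is 0 then g k = 1 else I (g k))}.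
  exists (fun k => sval (constructive_indefinite_description _ (gE k))) => k.
  by case: constructive_indefinite_description.
exists g; split.
- by case: (gP 0%N).
- by case=> // k _; case: (gP k.+1).
move=> k; case: (gP k) (gP k.+1) => ek _ [ek1 _].
apply: (torsion_free_natrI A_tf (fact_gt0 k)).
by rewrite mulrA -natrM mulnC -factS -ek1 exprS ek; ring.
Qed.

End DividedPowers.

Section TruncatedSeries.
Variable R : comNzRingType.
Implicit Types (D S T E U V Pi : {poly R}) (g : nat -> R).

Definition Xn_dvd n U := forall i, (i < n)%N -> U`_i = 0.

Lemma Xn_dvdD n U V : Xn_dvd n U -> Xn_dvd n V -> Xn_dvd n (U + V).
Proof. by move=> hU hV i lt_in; rewrite coefD hU ?hV ?addr0. Qed.

Lemma Xn_dvdB n U V : Xn_dvd n U -> Xn_dvd n V -> Xn_dvd n (U - V).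
Proof. by move=> hU hV i lt_in; rewrite coefB hU ?hV ?subr0. Qed.

Lemma Xn_dvdMr n U V : Xn_dvd n U -> Xn_dvd n (U * V).
Proof.
move=> hU i lt_in; rewrite coefM big1 // => k _.
by rewrite hU ?mul0r // (leq_trans (ltn_ord k) lt_in).
Qed.

Lemma Xn_dvdMl n U V : Xn_dvd n V -> Xn_dvd n (U * V).
Proof. by rewrite mulrC; apply: Xn_dvdMr. Qed.

(* The logarithmic derivative of T is -Pi/X, to precision X^n. *)
Definition newton_rel n T Pi := Xn_dvd n ('X * T^`() + T * Pi).

Lemma newton_relM n T E PiT PiE :
  newton_rel n T PiT -> newton_rel n E PiE -> newton_rel n (T * E) (PiT + PiE).
Proof.
move=> hT hE; rewrite /newton_rel.
suff -> : 'X * (T * E)^`() + T * E * (PiT + PiE) =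
          ('X * T^`() + T * PiT) * E + T * ('X * E^`() + E * PiE).
  exact: Xn_dvdD (Xn_dvdMr _ hT) (Xn_dvdMl _ hE).
by rewrite derivM; ring.
Qed.

Lemma newton_relB n S T Pi :
  newton_rel n S Pi -> newton_rel n T Pi -> newton_rel n (S - T) Pi.
Proof.
move=> hS hT; rewrite /newton_rel.
suff -> : 'X * (S - T)^`() + (S - T) * Pi =
          ('X * S^`() + S * Pi) - ('X * T^`() + T * Pi) by exact: Xn_dvdB.
by rewrite derivB; ring.
Qed.

Lemma newton_rel_congr n T Pi Pi' :
  Xn_dvd n (Pi' - Pi) -> newton_rel n T Pi -> newton_rel n T Pi'.
Proof.
move=> hPi hT; rewrite /newton_rel.
suff -> : 'X * T^`() + T * Pi' = ('X * T^`() + T * Pi) + T * (Pi' - Pi).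
  exact: Xn_dvdD hT (Xn_dvdMl _ hPi).
by ring.
Qed.

(* The coefficient of X^i gives i D_i = - sum_(k < i) D_k Pi_(i-k), so D vanishes inductively. *)
Lemma newton_rel_eq0 n D Pi : torsion_free R -> Pi`_0 = 0 -> D`_0 = 0 ->
  newton_rel n D Pi -> Xn_dvd n D.
Proof.
move=> R_tf Pi0 D0 hD; elim/ltn_ind => -[// | i] IHi lt_in.
have := hD i.+1 lt_in.
rewrite coefD coefXM coef_deriv coefM big_ord_recr /= subnn Pi0 mulr0 addr0.
rewrite big1 => [|k _]; last by rewrite IHi ?mul0r // (ltn_trans _ lt_in).
by rewrite addr0 -mulr_natl; apply: R_tf.
Qed.

Lemma newton_rel_uniq n S T Pi : torsion_free R -> Pi`_0 = 0 -> S`_0 = T`_0 ->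
  newton_rel n S Pi -> newton_rel n T Pi -> forall i, (i < n)%N -> S`_i = T`_i.
Proof.
move=> R_tf Pi0 eST hS hT i lt_in; apply/eqP; rewrite -subr_eq0 -coefB; apply/eqP.
by apply: newton_rel_eq0 (newton_relB hS hT) _ lt_in; rewrite // coefB eST subrr.
Qed.

(* The truncation of sum_k g_k X^(j k); an exponential when (k+1) g_(k+1) = d g_k. *)
Definition lacunary n j g : {poly R} :=
  \poly_(i < n) (if (j %| i)%N then g (i %/ j)%N else 0).

Lemma newton_rel_lacunary n j d g : (0 < j)%N ->
  (forall k, k.+1%:R * g k.+1 = d * g k) ->
  newton_rel n (lacunary n j g) (- (j%:R * d) *: 'X^j).
Proof.
move=> j_gt0 gS i lt_in.
rewrite coefD coefXM -scalerAr coefZ coefMXn mulNr.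
have coefE m : (m < n)%N -> (lacunary n j g)`_m =
    if (j %| m)%N then g (m %/ j)%N else 0 by move=> lt_mn; rewrite coef_poly lt_mn.
case: i lt_in => [|i] lt_in /=; first by rewrite j_gt0 mulr0 subr0.
rewrite coef_deriv coefE //.
have [/dvdnP[[|k] ek]|j_ndvd] := boolP (j %| i.+1)%N; first by rewrite mul0n in ek.
  have e_sub : (i.+1 - j = k * j)%N by rewrite ek mulSn addKn.
  rewrite e_sub coefE; last by rewrite -e_sub (leq_ltn_trans (leq_subr _ _)).
  rewrite ek ltnNge leq_pmull // !mulnK // dvdn_mull //= -[g _ *+ _]mulr_natl natrM.
  by rewrite mulrAC gS; ring.
rewrite mul0rn add0r; case: ltnP => [|le_ji]; first by rewrite mulr0 oppr0.
rewrite coefE ?(leq_ltn_trans (leq_subr _ _)) // dvdn_subl ?dvdnn //.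
by rewrite (negbTE j_ndvd) mulr0 oppr0.
Qed.

Lemma take_polyS n U : take_poly n.+1 U = take_poly n U + U`_n *: 'X^n.
Proof.
apply/polyP => i; rewrite coefD coefZ coefXn !coef_take_poly ltnS.
by case: ltngtP => [lt_in|//|->]; rewrite ?mulr0 ?addr0 ?mulr1 ?add0r.
Qed.

End TruncatedSeries.

Section NewtonIdentities.
Variable R : comNzRingType.
Implicit Type e : nat -> R.

Definition psum e n := nth 0 (psums e n) n.-1.

Lemma psum0 e : psum e 0 = 0.
Proof. by []. Qed.

Lemma size_psums e n : size (psums e n) = n.
Proof. by elim: n => //= n IHn; rewrite size_rcons IHn. Qed.

Lemma nth_psums e m k : (k < m)%N -> nth 0 (psums e m) k = psum e k.+1.
Proof.
elim: m => // m IHm; rewrite ltnS leq_eqVlt => /orP[/eqP -> // | lt_km].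
by rewrite /= nth_rcons size_psums lt_km IHm.
Qed.

Lemma psumS e m : psum e m.+1 =
  \sum_(j < m) (-1) ^+ j * e j.+1 * psum e (m - j) + (-1) ^+ m * m.+1%:R * e m.+1.
Proof.
rewrite /psum /= nth_rcons size_psums ltnn eqxx /newton_step subn1 /=.
congr (_ + _); rewrite (big_addn 0 m.+1 1) subn1 big_mkord; apply: eq_bigr => j _.
have lt_jm := ltn_ord j.
rewrite nth_psums; last by lia.
by rewrite addn1 subn1 /= (_ : (m.+1 - j.+1 - 1).+1 = m - j)%N //; lia.
Qed.

Definition esym_poly n e : {poly R} := \poly_(i < n) ((-1) ^+ i * e i).
Definition psum_poly n e : {poly R} := \poly_(i < n) psum e i.

Lemma newton_rel_esym_psum n e : e 0%N = 1 -> newton_rel n (esym_poly n e) (psum_poly n e).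
Proof.
move=> e0 i lt_in; rewrite coefD coefXM coefM coef_deriv.
have coefS k : (k < n)%N -> (esym_poly n e)`_k = (-1) ^+ k * e k.
  by move=> lt_kn; rewrite coef_poly lt_kn.
have coefP k : (k < n)%N -> (psum_poly n e)`_k = psum e k.
  by move=> lt_kn; rewrite coef_poly lt_kn.
case: i lt_in => [|m] lt_mn; first by rewrite big_ord1 /= coefP // mulr0 add0r.
have n_gt0 : (0 < n)%N by lia.
rewrite /= coefS // big_ord_recr /= subnn coefP // psum0 mulr0 addr0.
rewrite big_ord_recl /= subn0 coefS // coefP // e0 expr0 !mul1r.
have -> : \sum_(k < m) (esym_poly n e)`_(bump 0 k) * (psum_poly n e)`_(m.+1 - bump 0 k)
    = - \sum_(k < m) (-1) ^+ k * e k.+1 * psum e (m - k).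
  rewrite -sumrN; apply: eq_bigr => k _; have lt_km := ltn_ord k.
  rewrite /bump /= add1n subSS coefS ?coefP; [|lia|lia].
  by rewrite exprS; ring.
by rewrite psumS -mulr_natl exprS; ring.
Qed.

End NewtonIdentities.

Section Deformation.
Variables (A : comNzRingType) (p : nat) (I : A -> Prop).
Hypotheses (p_pr : prime p) (A_loc : Zp_local_algebra A p) (A_tf : torsion_free A).
Hypothesis I_dp : dp_ideal p I.

Let I_ideal : is_ideal I := I_dp.1.
Implicit Types (T U V W Pi : {poly A}) (e g eP eQ : nat -> A).

Definition coefs_congr n U V := forall i, (i < n)%N -> I (U`_i - V`_i).

Lemma coefs_congr_trans n U V W :
  coefs_congr n U V -> coefs_congr n V W -> coefs_congr n U W.
Proof.
move=> hUV hVW i lt_in; rewrite -[U`_i](subrK V`_i) -addrA.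
by apply: (idealD I_ideal); [apply: hUV | apply: hVW].
Qed.

Lemma lacunary_coef_ideal n j g : (0 < j)%N -> (forall k, (0 < k)%N -> I (g k)) ->
  forall i, (0 < i)%N -> I (lacunary n j g)`_i.
Proof.
move=> j_gt0 Ig i i_gt0; rewrite coef_poly.
case: ifP => _; last exact: ideal0 I_ideal.
case: ifP => [j_dvd | _]; last exact: ideal0 I_ideal.
by apply: Ig; rewrite divn_gt0 // dvdn_leq.
Qed.

Lemma newton_rel_deform_step n T Pi j b : (0 < n)%N -> I b -> newton_rel n T Pi ->
  exists T' : {poly A}, [/\ T'`_0 = T`_0, coefs_congr n T' T &
    newton_rel n T' (Pi + (j.+1%:R * b) *: 'X^(j.+1))].
Proof.
move=> n_gt0 Ib hT.
have [g [g0 Ig gS]] := divided_powers_exist p_pr A_loc I_dp A_tf (idealN I_ideal Ib).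
have E0 : (lacunary n j.+1 g)`_0 = 1 by rewrite coef_poly n_gt0 dvdn0 div0n.
have hE := newton_rel_lacunary (n := n) (ltn0Sn j) gS; rewrite mulrN opprK in hE.
exists (T * lacunary n j.+1 g); split; last exact: newton_relM hT hE.
  by rewrite coef0M E0 mulr1.
move=> i lt_in; rewrite coefM big_ord_recr /= subnn E0 mulr1 addrK.
apply: (ideal_sum I_ideal) => k _; apply: (idealMl I_ideal).
by apply: lacunary_coef_ideal; rewrite ?subn_gt0.
Qed.

Lemma newton_rel_deform n T Pi (Pi' : {poly A}) : Pi'`_0 = Pi`_0 ->
  (forall i, (0 < i < n)%N -> exists2 b, I b & Pi'`_i - Pi`_i = i%:R * b) ->
  newton_rel n T Pi ->
  exists T' : {poly A}, [/\ T'`_0 = T`_0, coefs_congr n T' T & newton_rel n T' Pi'].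
Proof.
move=> Pi0 dPi hT; case: n dPi hT => [|n] dPi hT; first by exists T.
suff /(_ n (leqnn n)) [T' [T'0 congrT' hT']] : forall j, (j <= n)%N ->
    exists T' : {poly A}, [/\ T'`_0 = T`_0, coefs_congr n.+1 T' T &
      newton_rel n.+1 T' (Pi + take_poly j.+1 (Pi' - Pi))].
  exists T'; split=> //; apply: newton_rel_congr hT' => i lt_in.
  by rewrite coefB coefD coef_take_poly lt_in coefB; ring.
elim=> [_ | j IHj lt_jn].
  exists T; split=> //; first by move=> i _; rewrite subrr; exact: ideal0 I_ideal.
  by rewrite take_polyS take_poly0l add0r coefB Pi0 subrr scale0r addr0.
have [T1 [T10 congrT1 hT1]] := IHj (ltnW lt_jn).
have [b Ib eb] := dPi j.+1 lt_jn.
have [T2 [T20 congrT2 hT2]] := newton_rel_deform_step j (ltn0Sn n) Ib hT1.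
exists T2; split; first by rewrite T20.
  exact: coefs_congr_trans congrT2 congrT1.
by rewrite take_polyS addrA coefB eb.
Qed.

Lemma esym_poly_congr n eP eQ : eP 0%N = 1 -> eQ 0%N = 1 ->
  (forall i, (0 < i < n)%N -> exists2 b, I b & psum eP i - psum eQ i = i%:R * b) ->
  coefs_congr n (esym_poly n eP) (esym_poly n eQ).
Proof.
move=> eP0 eQ0 dpsum.
have coefP e i : (i < n)%N -> (psum_poly n e)`_i = psum e i.
  by move=> lt_in; rewrite coef_poly lt_in.
have psum_poly0 e : (psum_poly n e)`_0 = 0 by rewrite coef_poly; case: ifP.
have dcoef i : (0 < i < n)%N ->
    exists2 b, I b & (psum_poly n eP)`_i - (psum_poly n eQ)`_i = i%:R * b.
  by move=> /[dup] /andP[_ lt_in] /dpsum; rewrite !coefP.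
have [T [T0 congrT hT]] := newton_rel_deform
  (etrans (psum_poly0 _) (esym (psum_poly0 _))) dcoef (newton_rel_esym_psum (n := n) eQ0).
move=> i lt_in; rewrite (newton_rel_uniq A_tf _ _ (newton_rel_esym_psum (n := n) eP0) hT) //.
  exact: congrT.
by rewrite T0 !coef_poly eP0 eQ0.
Qed.

End Deformation.

Lemma elem0 (A : comNzRingType) (P : {poly A}) : P \is monic -> elem P 0 = 1.
Proof. by move=> P_monic; rewrite /elem expr0 mul1r subn0 -lead_coefE (monicP P_monic). Qed.

Theorem proposition2p10 (p : nat) (A : comNzRingType) (I : A -> Prop)
    (P Q : {poly A}) (N : nat) :
  prime p -> Zp_local_algebra A p -> torsion_free A -> dp_ideal p I ->
  P \is monic -> Q \is monic -> (1 <= N)%N ->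
  (forall n : nat, (1 <= n <= N)%N -> cong_mult n I (powsum P n) (powsum Q n)) ->
  forall n : nat, (1 <= n <= N)%N -> cong_mod I (elem P n) (elem Q n).
Proof.
move=> p_pr A_loc A_tf I_dp P_monic Q_monic _ dpowsum n /andP[_ le_nN].
have dpsum i : (0 < i < N.+1)%N ->
    exists2 b, I b & psum (elem P) i - psum (elem Q) i = i%:R * b.
  by move=> /dpowsum[b [Ib eb]]; exists b.
have := esym_poly_congr p_pr A_loc A_tf I_dp (elem0 P_monic) (elem0 Q_monic) dpsum le_nN.
rewrite !coef_poly ltnS le_nN -mulrBr.
by move/(ideal_signMl I_dp.1).
Qed.
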